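(* Let $r=\langle L\leftarrow K\rightarrow R,\ c\rangle$ be a conditional rule schema, let $G$ be a host graph in $\mathcal{G}(\mathcal{L})$, and let $g\colon L\to G$ be a premorphism. Then there exists at most one assignment $\alpha$ such that $g$ is a graph morphism $L^{g,\alpha}\to G$, i.e. such that $g$ preserves sources and targets and $l_G(g_V(v))=l_L(v)^{g,\alpha}$ for every node $v$ of $L$ and $m_G(g_E(e))=m_L(e)^{g,\alpha}$ for every edge $e$ of $L$.
   Context: Graphs. A graph over a label set $\mathcal{C}$ is $G=(V_G,E_G,s_G,t_G,l_G,m_G)$ with finite node set $V_G$ and edge set $E_G$, source and target maps $s_G,t_G\colon E_G\to V_G$, a partial node labelling $l_G\colon V_G\to\mathcal{C}$ and a total edge labelling $m_G\colon E_G\to\mathcal{C}$. $\mathcal{G}(\mathcal{C})$ denotes totally labelled graphs. A graph morphism $g\colon G\to H$ is a pair of maps $g_V\colon V_G\to V_H$, $g_E\colon E_G\to E_H$ preserving sources, targets, edge labels, and the labels of all labelled nodes. Host labels. Let $\mathrm{Char}$ be a fixed set of characters, $\mathbb{B}=\{\mathrm{true},\mathrm{false}\}$, and $\mathcal{L}=(\mathbb{Z}\cup\mathrm{Char}^* )^*\times\mathbb{B}$: a label is a finite sequence of integers and character strings (the empty sequence is allowed and differs from the empty string) paired with a boolean mark. Host graphs are graphs in $\mathcal{G}(\mathcal{L})$. Syntactic labels. Given a finite set Node of node identifiers and pairwise disjoint finite sets IVariable, SVariable, AVariable, LVariable of variables of types int, string, atom, list, expressions are generated by: Integer ::= Digit{Digit}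 | IVariable | $-$Integer | Integer ArithOp Integer | indeg(Node) | outdeg(Node); ArithOp ::= + | $-$ | $*$ | /; String ::= ''{Char}'' | SVariable | String . String (string concatenation); Atom ::= Integer | String | AVariable; List ::= empty | Atom | LVariable | List : List (list concatenation); Label ::= List Mark; Mark ::= true | false. An expression $e\in$ List is simple if (1) it contains no arithmetic operators, (2) it contains at most one occurrence of a list variable, and (3) each occurrence of a string expression in $e$ contains at most one occurrence of a string variable. Conditions: Condition ::= Type(List) | List (= | !=) List | Integer RelOp Integer | edge(Node, Node [, List]) | not Condition | Condition (and | or) Condition, with Type ::= int | string | atom and RelOp ::= > | >= | < | <=. Conditional rule schema. A rule schema $\langle L\leftarrow K\rightarrow R\rangle$ consists of inclusions $K\to L$, $K\to R$ where $L,R$ are totally labelled graphs over Label and $K$ consists of unlabelled nodes only; all list expressions in $L$ are simple and every variable occurring in $R$ occurs in $L$. A conditional rule schema $\langle L\leftarrow K\rightarrow R, c\rangle$ adds a condition $c$ all of whose variables occur in $L$. The variable sets above are those occurring in the rule schema; Node is the set of node identifiers of $L$ (equal to that of $R$). Premorphism: for $L$ labelled over Label and $G\in\mathcal{G}(\mathcal{L})$, a pair of maps $g_V\colon V_L\to V_G$, $g_E\colon E_L\to E_G$ preserving sources and targets (labels ignored). Assignment: $\alpha=(\alpha_I,\alpha_S,\alpha_A,\alpha_L)$ with $\alpha_I\colon\mathrm{IVariable}\to\mathbb{Z}$, $\alpha_S\colon\mathrm{SVariable}\to\mathrm{Char}^*$, $\alpha_A\colon\mathrm{AVariable}\to\mathbb{Z}\cup\mathrm{Char}^*$,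 $\alpha_L\colon\mathrm{LVariable}\to(\mathbb{Z}\cup\mathrm{Char}^* )^*$. Sequences of length one are identified with their single element. Evaluation $e^{g,\alpha}\in(\mathbb{Z}\cup\mathrm{Char}^* )^*$: empty $\mapsto$ empty sequence; a digit string or quoted character string $\mapsto$ the integer or string it denotes; a variable $x\mapsto\alpha(x)$; $-e_1\mapsto -e_1^{g,\alpha}$; $e_1\oplus e_2\mapsto e_1^{g,\alpha}\oplus_{\mathbb{Z}}e_2^{g,\alpha}$; indeg$(n)$/outdeg$(n)\mapsto$ the indegree/outdegree of $g_V(n)$ in $G$; $e_1.e_2$ and $e_1{:}e_2\mapsto$ concatenation of the values. For a label $l=e\,m$, $l^{g,\alpha}=(e^{g,\alpha},\mathrm{true})$ if $m=$true and $(e^{g,\alpha},\mathrm{false})$ otherwise. $L^{g,\alpha}$ is obtained from $L$ by replacing each label $l$ by $l^{g,\alpha}$. *)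

From HB Require Import structures.
From mathcomp Require Import all_boot all_algebra.
From Stdlib Require Lists.List.
Set Implicit Arguments. Unset Printing Implicit Defensive.
Import GRing.Theory Num.Theory.

Record graph (C : Type) := Graph {
  gV : finType; gE : finType;
  gsrc : gE -> gV; gtgt : gE -> gV;
  glab : gV -> option C;
  gelab : gE -> C
}.

Definition totally_labelled (C : Type) (G : graph C) : Prop :=
  forall v, glab G v <> None.

Definition indeg (C : Type) (G : graph C) (v : gV G) : nat :=
  #|[pred e : gE G | gtgt G e == v]|.
Definition outdeg (C : Type) (G : graph C) (v : gV G) : nat :=
  #|[pred e : gE G | gsrc G e == v]|.

(* Host labels: L = (Z u Char^* )^* x B *)
Inductive hatom (Ch : Type) := HInt of int | HStr of seq Ch.
Definition hlabel (Ch : Type) := (seq (hatom Ch) * bool)%type.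

Inductive arith_op := OAdd | OSub | OMul | ODiv.
Inductive atype := TInt | TString | TAtom.
Inductive relop := RGt | RGe | RLt | RLe.

Section Syntax.
Variables (Ch Node IV SV AV LV : Type).

Inductive iexpr :=
  | INum of nat
  | IVar of IV
  | INeg of iexpr
  | IOp of arith_op & iexpr & iexpr
  | IIndeg of Node
  | IOutdeg of Node.

Inductive sexpr :=
  | SLit of seq Ch
  | SVar of SV
  | SCat of sexpr & sexpr.

Inductive aexpr :=
  | AInt of iexpr
  | AStr of sexpr
  | AVar of AV.

Inductive lexpr :=
  | LEmpty
  | LAtom of aexpr
  | LVar of LV
  | LCat of lexpr & lexpr.

Definition label := (lexpr * bool)%type.

Inductive cond :=
  | CType of atype & lexpr
  | CEq of lexpr & lexpr
  | CNeq of lexpr & lexpr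
  | CRel of relop & iexpr & iexpr
  | CEdge of Node & Node & option lexpr
  | CNot of cond
  | CAnd of cond & cond
  | COr of cond & cond.

(* Variables of all four types (the four sets are disjoint by construction) *)
Inductive var := VI of IV | VS of SV | VA of AV | VL of LV.

Fixpoint ivars (e : iexpr) : seq var :=
  match e with
  | INum _ => [::] | IVar x => [:: VI x] | INeg e => ivars e
  | IOp _ a b => ivars a ++ ivars b | IIndeg _ => [::] | IOutdeg _ => [::]
  end.
Fixpoint svars (e : sexpr) : seq var :=
  match e with
  | SLit _ => [::] | SVar x => [:: VS x] | SCat a b => svars a ++ svars b
  end.
Definition avars (e : aexpr) : seq var :=
  match e with AInt i => ivars i | AStr s => svars s | AVar x => [:: VA x] end.
Fixpoint lvars (e : lexpr) : seq var :=
  match e with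
  | LEmpty => [::] | LAtom a => avars a | LVar x => [:: VL x]
  | LCat a b => lvars a ++ lvars b
  end.
Fixpoint cvars (c : cond) : seq var :=
  match c with
  | CType _ l => lvars l
  | CEq a b | CNeq a b => lvars a ++ lvars b
  | CRel _ a b => ivars a ++ ivars b
  | CEdge _ _ None => [::]
  | CEdge _ _ (Some l) => lvars l
  | CNot c => cvars c
  | CAnd a b | COr a b => cvars a ++ cvars b
  end.

Fixpoint no_arith (e : iexpr) : bool :=
  match e with IOp _ _ _ => false | INeg e => no_arith e | _ => true end.
Fixpoint count_svar (s : sexpr) : nat :=
  match s with SLit _ => 0 | SVar _ => 1 | SCat a b => count_svar a + count_svar b end.
Fixpoint count_lvar (e : lexpr) : nat :=
  match e with
  | LVar _ => 1 | LCat a b => count_lvar a + count_lvar b | _ => 0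
  end.
Definition aexpr_simple (a : aexpr) : bool :=
  match a with
  | AInt i => no_arith i
  | AStr s => count_svar s <= 1
  | AVar _ => true
  end.
Fixpoint atoms_simple (e : lexpr) : bool :=
  match e with
  | LAtom a => aexpr_simple a
  | LCat a b => atoms_simple a && atoms_simple b
  | _ => true
  end.
Definition simple (e : lexpr) : bool := atoms_simple e && (count_lvar e <= 1).

End Syntax.

Record assignment (Ch IV SV AV LV : Type) := Assignment {
  asgI : IV -> int;
  asgS : SV -> seq Ch;
  asgA : AV -> hatom Ch;
  asgL : LV -> seq (hatom Ch)
}.

Section Eval.
Variables (Ch Node IV SV AV LV : Type).
Variables (G : graph (hlabel Ch)) (gv : Node -> gV G)
          (alpha : assignment Ch IV SV AV LV).

Definition eval_op (o : arith_op) (a b : int) : int :=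
  match o with
  | OAdd => (a + b)%R | OSub => (a - b)%R | OMul => (a * b)%R | ODiv => (a %/ b)%Z
  end.

Fixpoint ieval (e : iexpr Node IV) : int :=
  match e with
  | INum n => n%:Z
  | IVar x => asgI alpha x
  | INeg e => (- ieval e)%R
  | IOp o a b => eval_op o (ieval a) (ieval b)
  | IIndeg n => (indeg G (gv n))%:Z
  | IOutdeg n => (outdeg G (gv n))%:Z
  end.
Fixpoint seval (e : sexpr Ch SV) : seq Ch :=
  match e with
  | SLit s => s | SVar x => asgS alpha x | SCat a b => seval a ++ seval b
  end.
Definition aeval (e : aexpr Ch Node IV SV AV) : hatom Ch :=
  match e with
  | AInt i => HInt Ch (ieval i) | AStr s => HStr (seval s) | AVar x => asgA alpha x
  end.
Fixpoint leval (e : lexpr Ch Node IV SV AV LV) : seq (hatom Ch) :=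
  match e with
  | LEmpty => [::]
  | LAtom a => [:: aeval a]     (* length-one sequences = their element *)
  | LVar x => asgL alpha x
  | LCat a b => leval a ++ leval b
  end.
Definition label_eval (l : label Ch Node IV SV AV LV) : hlabel Ch := (leval l.1, l.2).
End Eval.

(* Node identifiers = nodes of L.  K: unlabelled nodes only, no edges, *)
(* included into L and R by injective node maps.                       *)
Record rule_schema (Ch IV SV AV LV : Type) := RuleSchema {
  rLV : finType; rLE : finType;
  rLsrc : rLE -> rLV; rLtgt : rLE -> rLV;
  rLlab : rLV -> label Ch rLV IV SV AV LV;
  rLelab : rLE -> label Ch rLV IV SV AV LV;
  rRV : finType; rRE : finType;
  rRsrc : rRE -> rRV; rRtgt : rRE -> rRV;
  rRlab : rRV -> label Ch rLV IV SV AV LV;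
  rRelab : rRE -> label Ch rLV IV SV AV LV;
  rKV : finType;
  rKL : rKV -> rLV;
  rKR : rKV -> rRV;
  rcond : cond Ch rLV IV SV AV LV
}.

Section Schema.
Variables (Ch IV SV AV LV : Type) (r : rule_schema Ch IV SV AV LV).

Definition occurs_L (x : var IV SV AV LV) : Prop :=
  (exists v, List.In x (lvars (rLlab r v).1)) \/
  (exists e, List.In x (lvars (rLelab r e).1)).
Definition occurs_R (x : var IV SV AV LV) : Prop :=
  (exists v, List.In x (lvars (rRlab r v).1)) \/
  (exists e, List.In x (lvars (rRelab r e).1)).
Definition occurs_c (x : var IV SV AV LV) : Prop := List.In x (cvars (rcond r)).

Definition wf_rule_schema : Prop :=
  [/\ injective (rKL r), injective (rKR r),
      (forall v, simple (rLlab r v).1) /\ (forall e, simple (rLelab r e).1),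
      (forall x, occurs_R x -> occurs_L x) /\ (forall x, occurs_c x -> occurs_L x)
    &
      (forall x, occurs_L x \/ occurs_R x \/ occurs_c x)].

Definition premorphism (G : graph (hlabel Ch)) (gv : rLV r -> gV G) (ge : rLE r -> gE G) : Prop :=
  (forall e, gsrc G (ge e) = gv (rLsrc r e)) /\
  (forall e, gtgt G (ge e) = gv (rLtgt r e)).

Definition morphism_under (G : graph (hlabel Ch)) (gv : rLV r -> gV G) (ge : rLE r -> gE G)
    (alpha : assignment Ch IV SV AV LV) : Prop :=
  [/\ premorphism G gv ge,
      forall v, glab G (gv v) = Some (label_eval G gv alpha (rLlab r v))
    & forall e, gelab G (ge e) = label_eval G gv alpha (rLelab r e)].
End Schema.

From mathcomp Require Import all_boot all_algebra.
From mathcomp Require Import zify.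
From Stdlib Require List.
From Stdlib Require Import FunctionalExtensionality.

Set Implicit Arguments.
Unset Strict Implicit.

(* If g is a morphism L^{g,alpha} -> G and L^{g,beta} -> G, then every label
   l of L satisfies l^{g,alpha} = l^{g,beta}, since both equal the label of
   its image in G.  The heart of the proof is that a *simple* list expression
   is "injective in its variables": if e^{g,alpha} = e^{g,beta} then alpha and
   beta agree on every variable of e.  This holds because a concatenation
   e1 : e2 with at most one list variable has a side without list variables,
   whose value has a length independent of the assignment; so the equal
   values split into equal values of e1 and of e2.  The same argument works
   for string concatenation with at most one string variable, and integer
   expressions without arithmetic operators are variables, constants or
   negations of such.  Finally, well-formedness of the schema makes every
   variable occur in a label of L, so alpha and beta agree everywhere and are
   equal by function extensionality. *)

Lemma cat_eq_split (T : Type) (s1 s2 t1 t2 : seq T) :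
  size s1 = size t1 \/ size s2 = size t2 ->
  s1 ++ s2 = t1 ++ t2 -> s1 = t1 /\ s2 = t2.
Proof.
have left_split : forall u1 v1 u2 v2 : seq T,
    size u1 = size v1 -> u1 ++ u2 = v1 ++ v2 -> u1 = v1 /\ u2 = v2.
  elim=> [|x u1 IH] [|y v1] //= u2 v2 Hsize Hcat.
  case: Hsize Hcat => Hsize [-> Hcat].
  by have [-> ->] := IH _ _ _ Hsize Hcat.
case=> [Hsize Hcat|Hsize Hcat]; first exact: left_split Hcat.
apply: (left_split _ _ _ _ _ Hcat).
by have := congr1 size Hcat; rewrite !size_cat Hsize => /addIn.
Qed.

Section Determination.
Variables (Ch Node IV SV AV LV : Type) (G : graph (hlabel Ch)) (gv : Node -> gV G).
Variables (alpha beta : assignment Ch IV SV AV LV).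

Definition agree (x : var IV SV AV LV) : Prop :=
  match x with
  | VI i => asgI alpha i = asgI beta i
  | VS s => asgS alpha s = asgS beta s
  | VA t => asgA alpha t = asgA beta t
  | VL l => asgL alpha l = asgL beta l
  end.

Definition agree_on (xs : seq (var IV SV AV LV)) : Prop :=
  forall x, List.In x xs -> agree x.

Lemma agree_on_cat (xs ys : seq (var IV SV AV LV)) :
  agree_on xs -> agree_on ys -> agree_on (xs ++ ys).
Proof. by move=> Hxs Hys x /List.in_app_iff [/Hxs|/Hys]. Qed.

Lemma ieval_determines (e : iexpr Node IV) : no_arith e ->
  ieval G gv alpha e = ieval G gv beta e -> agree_on (ivars SV AV LV e).
Proof.
elim: e => [n|i|e IH|o e1 _ e2 _|n|n] //= Hsimple Heq x //.
- by case=> [<-|[]].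
- by apply: IH => //; exact: GRing.oppr_inj Heq.
Qed.

Lemma size_seval_closed (e : sexpr Ch SV) : count_svar e = 0 ->
  size (seval alpha e) = size (seval beta e).
Proof.
elim: e => //= e1 IH1 e2 IH2 /eqP; rewrite addn_eq0 => /andP [/eqP H1 /eqP H2].
by rewrite !size_cat IH1 ?IH2.
Qed.

Lemma seval_determines (e : sexpr Ch SV) : count_svar e <= 1 ->
  seval alpha e = seval beta e -> agree_on (svars IV AV LV e).
Proof.
elim: e => [s|s|e1 IH1 e2 IH2] /= Hcount Heq.
- by move=> x [].
- by move=> x [<-|[]].
have Hclosed : count_svar e1 = 0 \/ count_svar e2 = 0 by lia.
have Hsize : size (seval alpha e1) = size (seval beta e1) \/
             size (seval alpha e2) = size (seval beta e2).
  by case: Hclosed => /size_seval_closed; [left | right].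
have [Heq1 Heq2] := cat_eq_split Hsize Heq.
by apply: agree_on_cat; [apply: IH1 | apply: IH2] => //; lia.
Qed.

Lemma aeval_determines (e : aexpr Ch Node IV SV AV) : aexpr_simple e ->
  aeval G gv alpha e = aeval G gv beta e -> agree_on (avars LV e).
Proof.
case: e => [i|s|t] /= Hsimple Heq.
- by case: Heq; exact: ieval_determines.
- by case: Heq; exact: seval_determines.
- by move=> x [<-|[]].
Qed.

Lemma size_leval_closed (e : lexpr Ch Node IV SV AV LV) : count_lvar e = 0 ->
  size (leval G gv alpha e) = size (leval G gv beta e).
Proof.
elim: e => //= e1 IH1 e2 IH2 /eqP; rewrite addn_eq0 => /andP [/eqP H1 /eqP H2].
by rewrite !size_cat IH1 ?IH2.
Qed.

Lemma leval_determines (e : lexpr Ch Node IV SV AV LV) : simple e ->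
  leval G gv alpha e = leval G gv beta e -> agree_on (lvars e).
Proof.
rewrite /simple; elim: e => [|t|l|e1 IH1 e2 IH2] /=.
- by move=> _ _ x [].
- by rewrite andbT => Hsimple [Heq]; exact: aeval_determines.
- by move=> _ Heq x [<-|[]].
case/andP=> /andP [Hatoms1 Hatoms2] Hcount Heq.
have Hclosed : count_lvar e1 = 0 \/ count_lvar e2 = 0 by lia.
have Hsize : size (leval G gv alpha e1) = size (leval G gv beta e1) \/
             size (leval G gv alpha e2) = size (leval G gv beta e2).
  by case: Hclosed => /size_leval_closed; [left | right].
have [Heq1 Heq2] := cat_eq_split Hsize Heq.
by apply: agree_on_cat; [apply: IH1 | apply: IH2];
  rewrite // ?Hatoms1 ?Hatoms2 /=; lia.
Qed.

Lemma assignment_ext : (forall x, agree x) -> alpha = beta.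
Proof.
move=> Hagree.
have eta (a : assignment Ch IV SV AV LV) :
  a = Assignment (asgI a) (asgS a) (asgA a) (asgL a) by case: a.
rewrite (eta alpha) (eta beta).
by congr Assignment; apply: functional_extensionality => x;
  [exact: (Hagree (VI _ _ _ x)) | exact: (Hagree (VS _ _ _ x))
  | exact: (Hagree (VA _ _ _ x)) | exact: (Hagree (VL _ _ _ x))].
Qed.

End Determination.

Lemma wf_occurs_L (Ch IV SV AV LV : Type) (r : rule_schema Ch IV SV AV LV) :
  wf_rule_schema r -> forall x, occurs_L r x.
Proof. by case=> _ _ _ [HR Hc] Hall x; case: (Hall x) => [|[/HR|/Hc]]. Qed.

Theorem mainTheorem1 (Ch IV SV AV LV : Type) (r : rule_schema Ch IV SV AV LV)
    (Hr : wf_rule_schema r)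
    (G : graph (hlabel Ch)) (HG : totally_labelled G)
    (gv : rLV r -> gV G) (ge : rLE r -> gE G) (Hg : premorphism r G gv ge)
    (alpha beta : assignment Ch IV SV AV LV) :
  morphism_under r G gv ge alpha -> morphism_under r G gv ge beta -> alpha = beta.
Proof.
case=> _ Hnode_alpha Hedge_alpha [] _ Hnode_beta Hedge_beta.
have [_ _ [Hsimple_node Hsimple_edge] _ _] := Hr.
apply: assignment_ext => x.
case: (wf_occurs_L Hr x) => [[v Hx]|[e Hx]].
-
  have := Hnode_alpha v; rewrite Hnode_beta => -[Heq].
  exact: (leval_determines (Hsimple_node v) (esym Heq)).
-
  have := Hedge_alpha e; rewrite Hedge_beta => /(congr1 fst) /= Heq.
  exact: (leval_determines (Hsimple_edge e) (esym Heq)).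
Qed.
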